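(* Let $K$ be a field, $f\colon R\to S$ a morphism of Zinbiel algebras, $N$ a positive integer, $\Theta_t=\sum_{i=0}^N\theta_it^i$ a deformation of order $N$ of $f$, and $\theta_{N+1}=(m_{R,N+1};m_{S,N+1};f_{N+1})\in C^2_{\mathrm{Zinb}}(f,f)$. Then $\widetilde{\Theta}_t:=\Theta_t+\theta_{N+1}t^{N+1}$ is a deformation of order $N+1$ of $f$ (an order $N+1$ extension of $\Theta_t$) if and only if $\mathrm{Ob}_\Theta=d^2_f\theta_{N+1}$.
   Context: A Zinbiel algebra over $K$ is a $K$-vector space $R$ with bilinear product $x\cdot y$ (also written $m_R(x,y)$) satisfying $(x\cdot y)\cdot z=x\cdot(y\cdot z)+x\cdot(z\cdot y)$. A morphism $f\colon R\to S$ is a linear map with $f(x\cdot y)=f(x)\cdot f(y)$. $R$ is a bimodule over itself, $S$ over itself, and $S$ is an $R$-bimodule via $r\cdot s=f(r)\cdot s$, $s\cdot r=s\cdot f(r)$. For a bimodule $A$ over $R$ and $1\le n\le4$, $C^n_{\mathrm{Zinb}}(R,A)=\mathrm{Hom}_K(R^{\otimes n},A)$ with $(d^1\varphi)(x,y)=x\cdot\varphi(y)-\varphi(x\cdot y)+\varphi(x)\cdot y$, $(d^2\varphi)(x,y,z)=x\cdot(\varphi(y,z)+\varphi(z,y))-\varphi(x\cdot y,z)+\varphi(x,y\cdot z+z\cdot y)-\varphi(x,y)\cdot z$, $(d^3\varphi)(x,y,z,w)=x\cdot\{\varphi(y,z,w)-\varphi(z,w,y)+\varphi(z,y,w)-\varphi(w,z,y)\}-\varphi(x\cdot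 y,z,w)+\varphi(x,y\cdot z+z\cdot y,w)-\varphi(x,y,z\cdot w+w\cdot z)+\varphi(x,y,z)\cdot w$. The deformation complex: $C^0_{\mathrm{Zinb}}(R,S)=0$, $d^0=0$, $C^n_{\mathrm{Zinb}}(f,f)=C^n_{\mathrm{Zinb}}(R,R)\times C^n_{\mathrm{Zinb}}(S,S)\times C^{n-1}_{\mathrm{Zinb}}(R,S)$ ($1\le n\le4$), $d^i_f(\xi;\pi;\varphi)=(d^i\xi;d^i\pi;f\xi-\pi f-d^{i-1}\varphi)$ with $(f\xi)(x_1,\dots)=f(\xi(x_1,\dots))$, $(\pi f)(x_1,\dots)=\pi(f(x_1),\dots)$. For a positive integer $M$, a deformation of order $M$ of $f$ is $\Theta_t=\sum_{i=0}^M\theta_it^i$ with $\theta_0=(m_R;m_S;f)$ (so $m_{R,0}=m_R$, $m_{S,0}=m_S$, $f_0=f$) and $\theta_i=(m_{R,i};m_{S,i};f_i)\in C^2_{\mathrm{Zinb}}(f,f)$, such that for all $0\le n\le M$: for $*=R,S$ and all $x,y,z\in *$, $\sum_{l=0}^n m_{*,l}(m_{*,n-l}(x,y),z)=\sum_{l=0}^n m_{*,l}(x,m_{*,n-l}(y,z)+m_{*,n-l}(z,y))$; and for all $x,y\in R$, $\sum_{i=0}^n f_i(m_{R,n-i}(x,y))=\sum_{i+j+k=n}m_{S,i}(f_j(x),f_k(y))$ (indices $\ge0$). The obstruction class of a deformation $\Theta_t$ of order $N$ is $\mathrm{Ob}_\Theta=(\mathrm{Ob}_R;\mathrm{Ob}_S;\mathrm{Ob}_f)\in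 C^3_{\mathrm{Zinb}}(f,f)$ where, for $*=R,S$ and $x,y,z\in *$, $\mathrm{Ob}_*(x,y,z)=\sum_{i=1}^N m_{*,i}(m_{*,N+1-i}(x,y),z)-\sum_{i=1}^N m_{*,i}(x,m_{*,N+1-i}(y,z)+m_{*,N+1-i}(z,y))$, and for $x,y\in R$, $\mathrm{Ob}_f(x,y)=\sum' m_{S,i}(f_j(x),f_k(y))-\sum_{i=1}^N f_i(m_{R,N+1-i}(x,y))$, where $\sum'$ runs over all triples of integers $i,j,k\ge0$ with $i+j+k=N+1$ and at least two of $i,j,k$ positive (equivalently, $i,j,k\le N$). *)

From HB Require Import structures.
From mathcomp Require Import all_boot all_order all_algebra.
Set Implicit Arguments. Unset Strict Implicit. Unset Printing Implicit Defensive.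
Import GRing.Theory.
Local Open Scope ring_scope.

Section Zinbiel.
Variable K : fieldType.

Definition is_lin (V W : lmodType K) (g : V -> W) : Prop :=
  forall (a : K) (x y : V), g (a *: x + y) = a *: g x + g y.

Definition is_bilin (V W : lmodType K) (m : V -> V -> W) : Prop :=
  (forall (a : K) (x y z : V), m (a *: x + y) z = a *: m x z + m y z) /\
  (forall (a : K) (x y z : V), m z (a *: x + y) = a *: m z x + m z y).

Definition is_trilin (V W : lmodType K) (m : V -> V -> V -> W) : Prop :=
  (forall (a : K) (x y z w : V), m (a *: x + y) z w = a *: m x z w + m y z w) /\
  (forall (a : K) (x y z w : V), m z (a *: x + y) w = a *: m z x w + m z y w) /\
  (forall (a : K) (x y z w : V), m z w (a *: x + y) = a *: m z w x + m z w y).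

Definition is_zinbiel (V : lmodType K) (m : V -> V -> V) : Prop :=
  is_bilin m /\ forall x y z : V, m (m x y) z = m x (m y z) + m x (m z y).

Definition is_zinb_morph (R S : lmodType K) (mR : R -> R -> R) (mS : S -> S -> S)
  (f : R -> S) : Prop :=
  is_lin f /\ forall x y : R, f (mR x y) = mS (f x) (f y).

(** Coboundaries for a bimodule A over (R, mR) with left action [la] and right
    action [ra]. *)
Definition d1 (R A : lmodType K) (mR : R -> R -> R) (la : R -> A -> A)
  (ra : A -> R -> A) (phi : R -> A) : R -> R -> A :=
  fun x y => la x (phi y) - phi (mR x y) + ra (phi x) y.

Definition d2 (R A : lmodType K) (mR : R -> R -> R) (la : R -> A -> A)
  (ra : A -> R -> A) (phi : R -> R -> A) : R -> R -> R -> A :=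
  fun x y z => la x (phi y z + phi z y) - phi (mR x y) z
               + phi x (mR y z + mR z y) - ra (phi x y) z.

Section Deformation.
Variables (R S : lmodType K).

(** An element (m_R ; m_S ; f) of C^2_Zinb(f,f) =
    C^2(R,R) x C^2(S,S) x C^1(R,S). *)
Record cochain2 := Cochain2 {
  c_mR : R -> R -> R;
  c_mS : S -> S -> S;
  c_f  : R -> S }.

Definition in_C2f (t : cochain2) : Prop :=
  is_bilin (c_mR t) /\ is_bilin (c_mS t) /\ is_lin (c_f t).

(** d^2_f : C^2(f,f) -> C^3(f,f), relative to the base structure (mR, mS, f);
    S is an R-bimodule via f. The result is a triple of functions. *)
Definition d2f (mR : R -> R -> R) (mS : S -> S -> S) (f : R -> S)
  (t : cochain2) :
  (R -> R -> R -> R) * (S -> S -> S -> S) * (R -> R -> S) :=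
  (d2 mR mR mR (c_mR t),
   d2 mS mS mS (c_mS t),
   fun x y => f (c_mR t x y) - c_mS t (f x) (f y)
              - d1 mR (fun r s => mS (f r) s) (fun s r => mS s (f r)) (c_f t) x y).

(** A (formal) family Theta_t = sum_i theta_i t^i is encoded by the sequence
    [Th : nat -> cochain2] of its coefficients; only the indices 0..M matter
    for a deformation of order M. *)
Definition is_deformation (mR : R -> R -> R) (mS : S -> S -> S) (f : R -> S)
  (M : nat) (Th : nat -> cochain2) : Prop :=
  [/\ c_mR (Th 0%N) = mR /\ c_mS (Th 0%N) = mS /\ c_f (Th 0%N) = f,
      (forall i, (i <= M)%N -> in_C2f (Th i)),
      (forall n, (n <= M)%N -> forall x y z : R,
         \sum_(l < n.+1) c_mR (Th l) (c_mR (Th (n - l)%N) x y) z =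
         \sum_(l < n.+1) c_mR (Th l) x (c_mR (Th (n - l)%N) y z
                                        + c_mR (Th (n - l)%N) z y)),
      (forall n, (n <= M)%N -> forall x y z : S,
         \sum_(l < n.+1) c_mS (Th l) (c_mS (Th (n - l)%N) x y) z =
         \sum_(l < n.+1) c_mS (Th l) x (c_mS (Th (n - l)%N) y z
                                        + c_mS (Th (n - l)%N) z y)) &
      (forall n, (n <= M)%N -> forall x y : R,
         \sum_(i < n.+1) c_f (Th i) (c_mR (Th (n - i)%N) x y) =
         \sum_(i < n.+1) \sum_(j < n.+1 | (i + j <= n)%N)
            c_mS (Th i) (c_f (Th j) x) (c_f (Th (n - i - j)%N) y))].

Definition extend (N : nat) (Th : nat -> cochain2) (th : cochain2) :
  nat -> cochain2 :=
  fun i => if i == N.+1 then th else Th i.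

Definition Ob_R (N : nat) (Th : nat -> cochain2) : R -> R -> R -> R :=
  fun x y z =>
    \sum_(1 <= i < N.+1) c_mR (Th i) (c_mR (Th (N.+1 - i)%N) x y) z
    - \sum_(1 <= i < N.+1) c_mR (Th i) x (c_mR (Th (N.+1 - i)%N) y z
                                          + c_mR (Th (N.+1 - i)%N) z y).

Definition Ob_S (N : nat) (Th : nat -> cochain2) : S -> S -> S -> S :=
  fun x y z =>
    \sum_(1 <= i < N.+1) c_mS (Th i) (c_mS (Th (N.+1 - i)%N) x y) z
    - \sum_(1 <= i < N.+1) c_mS (Th i) x (c_mS (Th (N.+1 - i)%N) y z
                                          + c_mS (Th (N.+1 - i)%N) z y).

(** sum' runs over i, j, k >= 0 with i + j + k = N+1 and at least two of
    i, j, k positive (k := N+1-i-j). *)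
Definition Ob_f (N : nat) (Th : nat -> cochain2) : R -> R -> S :=
  fun x y =>
    \sum_(i < N.+2) \sum_(j < N.+2 | (i + j <= N.+1)%N &&
            (1 < (0 < i)%N + (0 < j)%N + (0 < N.+1 - i - j)%N)%N)
        c_mS (Th i) (c_f (Th j) x) (c_f (Th (N.+1 - i - j)%N) y)
    - \sum_(1 <= i < N.+1) c_f (Th i) (c_mR (Th (N.+1 - i)%N) x y).

Definition Ob (N : nat) (Th : nat -> cochain2) :
  (R -> R -> R -> R) * (S -> S -> S -> S) * (R -> R -> S) :=
  (Ob_R N Th, Ob_S N Th, Ob_f N Th).

End Deformation.
End Zinbiel.

From mathcomp Require Import all_boot all_order all_algebra.
From mathcomp Require Import zify.
From Stdlib Require Import FunctionalExtensionality.
Import GRing.Theory.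

Set Implicit Arguments.
Unset Strict Implicit.
Unset Printing Implicit Defensive.

Local Open Scope ring_scope.

(* In each deformation equation of degree
   N+1, the terms containing theta_{N+1} are those in which every other factor
   is theta_0 = (m_R; m_S; f); they add up to d^2_f theta_{N+1}, while the
   remaining terms add up to Ob_Theta. Hence the degree N+1 equations say
   exactly Ob_Theta - d^2_f theta_{N+1} = 0, and those of lower degree are the
   equations of Theta itself. *)

Lemma big_ord_split_ends {V : zmodType} {n} (G : nat -> V) :
  \sum_(i < n.+2) G i = G 0%N + \sum_(1 <= i < n.+1) G i + G n.+1.
Proof. by rewrite -(big_mkord xpredT) big_nat_recr //= big_ltn. Qed.

(* [(i, j, n.+1 - i - j)] runs over the weak compositions of [n.+1] into three
   parts; the three with a single nonzero part are split off. *)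
Lemma big_weak_compositions3_split {V : zmodType} {n} (H : nat -> nat -> V) :
  \sum_(i < n.+2) \sum_(j < n.+2 | (i + j <= n.+1)%N) H i j =
  \sum_(i < n.+2) \sum_(j < n.+2 | (i + j <= n.+1)%N &&
      (1 < (0 < i)%N + (0 < j)%N + (0 < n.+1 - i - j)%N)%N) H i j
  + (H 0%N 0%N + H 0%N n.+1 + H n.+1 0%N).
Proof.
set two_pos := fun i j : nat => (1 < (0 < i)%N + (0 < j)%N + (0 < n.+1 - i - j)%N)%N.
have pure : \sum_(i < n.+2) \sum_(j < n.+2 | (i + j <= n.+1)%N && ~~ two_pos i j) H i j
    = H 0%N 0%N + H 0%N n.+1 + H n.+1 0%N.
  rewrite (big_ord_split_ends (fun i => \sum_(j < n.+2 | (i + j <= n.+1)%N && ~~ two_pos i j) H i j)).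
  rewrite big_nat [X in _ + X + _]big1 ?addr0 => [|i /andP[i_gt0 i_le]]; last first.
    by rewrite big_pred0 // => j; apply/negbTE/andP; rewrite /two_pos; lia.
  congr (_ + _).
  - rewrite (bigD1 ord0) // (bigD1 ord_max) ?big_pred0 => [|j|].
    + by rewrite /= addr0.
    + by apply/negbTE; rewrite -!val_eqE /two_pos /=; lia.
    by rewrite -val_eqE /two_pos /=; lia.
  - by rewrite (big_pred1 ord0) // => j; rewrite /= -val_eqE /two_pos /=; lia.
rewrite -pure -big_split /=.
by apply: eq_bigr => i _; apply: bigID.
Qed.

Section ZinbielDefect.
Variables (K : fieldType) (V : lmodType K).
Implicit Type m : nat -> V -> V -> V.

Definition zinb_defect m n x y z :=
  \sum_(l < n.+1) m l (m (n - l)%N x y) z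
  - \sum_(l < n.+1) m l x (m (n - l)%N y z + m (n - l)%N z y).

(* [Ob_R N Th] and [Ob_S N Th] are convertible to [zinb_obstruction] applied to
   the families [fun i => c_mR (Th i)] and [fun i => c_mS (Th i)]. *)
Definition zinb_obstruction m N x y z :=
  \sum_(1 <= i < N.+1) m i (m (N.+1 - i)%N x y) z
  - \sum_(1 <= i < N.+1) m i x (m (N.+1 - i)%N y z + m (N.+1 - i)%N z y).

Lemma eq_zinb_defect m m' n :
  (forall i, (i <= n)%N -> m i = m' i) -> zinb_defect m n = zinb_defect m' n.
Proof.
move=> mm'; do 3!apply: functional_extensionality => ?; rewrite /zinb_defect.
by congr (_ - _); apply: eq_bigr => l _; rewrite !mm' ?leq_subr // -ltnS.
Qed.

Lemma eq_zinb_obstruction m m' N :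
  (forall i, (i <= N)%N -> m i = m' i) -> zinb_obstruction m N = zinb_obstruction m' N.
Proof.
move=> mm'; do 3!apply: functional_extensionality => ?; rewrite /zinb_obstruction.
by congr (_ - _); apply: eq_big_nat => i /andP[i_gt0 i_le]; rewrite !mm' //; lia.
Qed.

Lemma zinb_defect_top m N x y z :
  zinb_defect m N.+1 x y z
  = zinb_obstruction m N x y z - d2 (m 0%N) (m 0%N) (m 0%N) (m N.+1) x y z.
Proof.
rewrite /zinb_defect (big_ord_split_ends (fun l => m l (m (N.+1 - l)%N x y) z)).
rewrite (big_ord_split_ends (fun l => m l x (m (N.+1 - l)%N y z + m (N.+1 - l)%N z y))).
rewrite subn0 subnn /zinb_obstruction /d2.
by rewrite !opprD !opprK !addrA (ACl (2*5*4*3*6*1)).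
Qed.

End ZinbielDefect.

Section Deformations.
Variables (K : fieldType) (R S : lmodType K).
Implicit Types (Th : nat -> cochain2 R S) (mR : R -> R -> R) (mS : S -> S -> S) (f : R -> S).

Definition morph_defect Th n x y :=
  \sum_(i < n.+1) \sum_(j < n.+1 | (i + j <= n)%N)
     c_mS (Th i) (c_f (Th j) x) (c_f (Th (n - i - j)%N) y)
  - \sum_(i < n.+1) c_f (Th i) (c_mR (Th (n - i)%N) x y).

Lemma morph_defect_top Th N x y :
  morph_defect Th N.+1 x y =
  Ob_f N Th x y - (d2f (c_mR (Th 0%N)) (c_mS (Th 0%N)) (c_f (Th 0%N)) (Th N.+1)).2 x y.
Proof.
rewrite /morph_defect (big_ord_split_ends (fun i => c_f (Th i) (c_mR (Th (N.+1 - i)%N) x y))).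
rewrite (big_weak_compositions3_split
           (fun i j => c_mS (Th i) (c_f (Th j) x) (c_f (Th (N.+1 - i - j)%N) y))).
rewrite !subn0 subnn /Ob_f /d2f /d1 /=.
by rewrite !opprD !opprK !addrA (ACl (1*6*5*4*2*7*3)).
Qed.

Lemma eq_morph_defect Th Th' n :
  (forall i, (i <= n)%N -> Th i = Th' i) ->
  morph_defect Th n = morph_defect Th' n.
Proof.
move=> ThTh'; do 2!apply: functional_extensionality => ?; rewrite /morph_defect; congr (_ - _).
  apply: eq_bigr => -[i /= lti] _; apply: eq_bigr => -[j /= ltj] _.
  by rewrite !ThTh' // -subnDA leq_subr.
by apply: eq_bigr => i _; rewrite !ThTh' ?leq_subr // -ltnS.
Qed.

Definition deformation_eqs Th n : Prop :=
  [/\ forall x y z : R, zinb_defect (fun i => c_mR (Th i)) n x y z = 0,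
      forall x y z : S, zinb_defect (fun i => c_mS (Th i)) n x y z = 0 &
      forall x y : R, morph_defect Th n x y = 0].

Lemma eq_deformation_eqs Th Th' n :
  (forall i, (i <= n)%N -> Th i = Th' i) ->
  deformation_eqs Th n <-> deformation_eqs Th' n.
Proof.
move=> ThTh'; rewrite /deformation_eqs (eq_morph_defect ThTh').
rewrite (@eq_zinb_defect _ _ _ (fun i => c_mR (Th' i))) => [|i /ThTh'-> //].
by rewrite (@eq_zinb_defect _ _ _ (fun i => c_mS (Th' i))) => [|i /ThTh'-> //].
Qed.

Lemma is_deformationE mR mS f M Th :
  is_deformation mR mS f M Th <->
  [/\ c_mR (Th 0%N) = mR /\ c_mS (Th 0%N) = mS /\ c_f (Th 0%N) = f,
      forall i, (i <= M)%N -> in_C2f (Th i) &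
      forall n, (n <= M)%N -> deformation_eqs Th n].
Proof.
split=> [[base C2 eqR eqS eqf] | [base C2 eqs]]; split=> // n le_nM.
- by split=> *; rewrite /zinb_defect /morph_defect ?eqR ?eqS ?eqf // subrr.
- by move=> x y z; apply/subr0_eq; case: (eqs n le_nM) => + _ _; apply.
- by move=> x y z; apply/subr0_eq; case: (eqs n le_nM) => _ + _; apply.
- by move=> x y; apply/esym/subr0_eq; case: (eqs n le_nM) => _ _; apply.
Qed.

Lemma is_deformationS mR mS f M Th :
  is_deformation mR mS f M.+1 Th <->
  [/\ is_deformation mR mS f M Th, in_C2f (Th M.+1) & deformation_eqs Th M.+1].
Proof.
split=> [/is_deformationE[base C2 eqs] | [/is_deformationE[base C2 eqs] C2top eqtop]].
  split; [apply/is_deformationE; split=> // n le_nM | by apply: C2 | by apply: eqs].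
  - by apply: C2; apply: leqW.
  - by apply: eqs; apply: leqW.
apply/is_deformationE; split=> // n; rewrite leq_eqVlt => /orP[/eqP-> // | ].
- exact: C2.
- exact: eqs.
Qed.

Lemma eq_is_deformation mR mS f M Th Th' :
  (forall i, (i <= M)%N -> Th i = Th' i) ->
  is_deformation mR mS f M Th <-> is_deformation mR mS f M Th'.
Proof.
suff transfer Th1 Th2 : (forall i, (i <= M)%N -> Th1 i = Th2 i) ->
    is_deformation mR mS f M Th1 -> is_deformation mR mS f M Th2.
  by move=> ThTh'; split; apply: transfer => // i /ThTh'.
move=> Th12 /is_deformationE[base C2 eqs]; apply/is_deformationE.
split=> [|i le_iM|n le_nM]; first by rewrite -Th12.
  by rewrite -Th12 //; apply: C2.
apply/(eq_deformation_eqs (Th := Th1)); last exact: eqs.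
by move=> i le_in; apply: Th12; apply: leq_trans le_nM.
Qed.

Lemma eq_Ob N Th Th' :
  (forall i, (i <= N)%N -> Th i = Th' i) -> Ob N Th = Ob N Th'.
Proof.
move=> ThTh'; congr (_, _, _).
- by apply: (@eq_zinb_obstruction _ _ (fun i => c_mR (Th i)) (fun i => c_mR (Th' i))) => i /ThTh'->.
- by apply: (@eq_zinb_obstruction _ _ (fun i => c_mS (Th i)) (fun i => c_mS (Th' i))) => i /ThTh'->.
do 2!apply: functional_extensionality => ?; rewrite /Ob_f; congr (_ - _).
  apply: eq_bigr => -[i /= lti] _; apply: eq_bigr => -[j /= ltj] /andP[le_ij two_pos].
  by rewrite !ThTh' //; lia.
by apply: eq_big_nat => i /andP[i_gt0 i_le]; rewrite !ThTh' //; lia.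
Qed.

Lemma deformation_eqs_top Th N :
  deformation_eqs Th N.+1 <->
  Ob N Th = d2f (c_mR (Th 0%N)) (c_mS (Th 0%N)) (c_f (Th 0%N)) (Th N.+1).
Proof.
have defR x y z : zinb_defect (fun i => c_mR (Th i)) N.+1 x y z =
    Ob_R N Th x y z - d2 (c_mR (Th 0%N)) (c_mR (Th 0%N)) (c_mR (Th 0%N)) (c_mR (Th N.+1)) x y z.
  exact: zinb_defect_top.
have defS x y z : zinb_defect (fun i => c_mS (Th i)) N.+1 x y z =
    Ob_S N Th x y z - d2 (c_mS (Th 0%N)) (c_mS (Th 0%N)) (c_mS (Th 0%N)) (c_mS (Th N.+1)) x y z.
  exact: zinb_defect_top.
have deff := morph_defect_top Th N.
split=> [[eqR eqS eqf] | ].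
  congr (_, _, _); do ?apply: functional_extensionality => ?; apply/subr0_eq.
  - by rewrite -defR.
  - by rewrite -defS.
  - by rewrite -deff.
rewrite /Ob /d2f => -[obR obS obf].
by split=> *; rewrite ?defR ?defS ?deff ?obR ?obS ?obf subrr.
Qed.

Lemma extend_le N Th th i :
  (i <= N)%N -> extend N Th th i = Th i.
Proof. by move=> le_iN; rewrite /extend ltn_eqF. Qed.

Lemma extend_top N Th th :
  extend N Th th N.+1 = th.
Proof. by rewrite /extend eqxx. Qed.

End Deformations.

Theorem theorem5p2 (K : fieldType) (R S : lmodType K)
  (mR : R -> R -> R) (mS : S -> S -> S) (f : R -> S)
  (N : nat) (Th : nat -> cochain2 R S) (th : cochain2 R S) :
  is_zinbiel mR -> is_zinbiel mS -> is_zinb_morph mR mS f ->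
  (0 < N)%N ->
  is_deformation mR mS f N Th ->
  in_C2f th ->
  (is_deformation mR mS f N.+1 (extend N Th th) <-> Ob N Th = d2f mR mS f th).
Proof.
move=> _ _ _ _ defTh thC2.
have agree := @extend_le _ _ _ N Th th.
have [[baseR [baseS basef]] _ _ _ _] := defTh.
have obE : Ob N (extend N Th th) =
    d2f (c_mR (extend N Th th 0%N)) (c_mS (extend N Th th 0%N)) (c_f (extend N Th th 0%N))
        (extend N Th th N.+1) <-> Ob N Th = d2f mR mS f th.
  by rewrite (eq_Ob agree) extend_top agree // baseR baseS basef.
split=> [/is_deformationS[_ _ /deformation_eqs_top/obE] // | ob].
apply/is_deformationS; split.
- exact/(eq_is_deformation _ _ _ agree).
- by rewrite extend_top.
- exact/deformation_eqs_top/obE.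
Qed.
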